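(* Let $(H,L_H)$ be a right-resolving, regular and follower-separated labeled graph, and let $C$ be a terminal component in $H$. For each $v \in C$ there is a finite path $\gamma$ in $H$ such that $t_H(\gamma) = v$ and the word $L_H(\gamma)$ is synchronizing for $L_H(X_H)$.
   Context: A labeled graph $(H,L_H)$: finite directed graph (vertices $V_H$, edges $E_H$, source/terminal maps $s_H,t_H$) without sinks or sources, labeling $L_H:E_H\to A$, edge shift $X_H$; $L_H$ acts coordinatewise; $Y=L_H(X_H)$. Right-resolving: distinct edges with the same source have distinct labels. $f_H(v)=\{L_H(x): x$ a right-infinite path starting at $v\}$; for $y\in Y$, $F(y)=\{w\in Y[0,\infty): y_{(-\infty,-1]}w\in Y\}$ with $Y[0,\infty)=\{y_{[0,\infty)}:y\in Y\}$. A vertex $v$ is regular if there is $z\in X_H$ whose edge $z_{-1}$ ends at $v$ with $f_H(v)=F(L_H(z))$; the graph is regular if all vertices are. Follower-separated: $f_H(v)=f_H(w)\Rightarrow v=w$. Components: classes of mutually reachable recurrent vertices (a vertex is recurrent if there is a path from it to itself); a component $C$ is terminal if no path leads from $C$ to a different component. A word $w$ of a subshift $Y$ is synchronizing if whenever $u,v$ are words with $uw$ and $wv$ words of $Y$, then $uwv$ is a word of $Y$. *)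

From mathcomp Require Import all_boot all_order all_algebra.
Set Implicit Arguments. Unset Strict Implicit. Unset Printing Implicit Defensive.
Import Order.TTheory GRing.Theory Num.Theory.
Local Open Scope ring_scope.

Section LabeledGraph.
Variables (V E : finType) (A : Type) (s t : E -> V) (L : E -> A).

Definition no_sinks_sources : Prop :=
  forall v : V, (exists e, s e = v) /\ (exists e, t e = v).

Definition edge_shift (z : int -> E) : Prop :=
  forall i : int, t (z i) = s (z (i + 1)).

Definition sofic (y : int -> A) : Prop :=
  exists z, edge_shift z /\ y = (fun i => L (z i)).

Definition right_resolving : Prop :=
  forall e e' : E, s e = s e' -> L e = L e' -> e = e'.

Definition rpath (x : nat -> E) : Prop := forall n, t (x n) = s (x n.+1).
Definition fH (v : V) (w : nat -> A) : Prop :=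
  exists x, rpath x /\ s (x 0%N) = v /\ w = (fun n => L (x n)).

Definition Yplus (w : nat -> A) : Prop :=
  exists y, sofic y /\ w = (fun n => y n%:Z).

Definition glue (y : int -> A) (w : nat -> A) : int -> A :=
  fun i => if i < 0 then y i else w `|i|%N.

Definition Ffol (y : int -> A) (w : nat -> A) : Prop :=
  Yplus w /\ sofic (glue y w).

Definition regular_vertex (v : V) : Prop :=
  exists z, edge_shift z /\ t (z (-1)) = v /\
    (forall w, fH v w <-> Ffol (fun i => L (z i)) w).

Definition regular_graph : Prop := forall v, regular_vertex v.

Definition follower_separated : Prop :=
  forall v w : V, (forall u, fH v u <-> fH w u) -> v = w.

(* finite (nonempty) paths e0 :: p *)
Definition epath (e0 : E) (p : seq E) : bool := path (fun e f => t e == s f) e0 p.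

Definition reaches (u w : V) : Prop :=
  u = w \/ exists e0 p, [/\ epath e0 p, s e0 = u & t (last e0 p) = w].

Definition recurrent (v : V) : Prop :=
  exists e0 p, [/\ epath e0 p, s e0 = v & t (last e0 p) = v].

Definition component (C : {set V}) : Prop :=
  exists v0, recurrent v0 /\
    forall w, w \in C <-> (recurrent w /\ reaches v0 w /\ reaches w v0).

Definition terminal_component (C : {set V}) : Prop :=
  component C /\
  forall C', component C' -> C' <> C ->
    ~ exists u w, [/\ u \in C, w \in C' & reaches u w].

Definition word_of (w : seq A) : Prop :=
  exists y i, sofic y /\ w = [seq y (i + k%:Z) | k <- iota 0 (size w)].

Definition synchronizing (w : seq A) : Prop :=
  forall u x : seq A, word_of (u ++ w) -> word_of (w ++ x) -> word_of (u ++ w ++ x).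

End LabeledGraph.

(* Let z witness the regularity of v and y = L_H(z).  By compactness there is a
   window W of y ending at position -1 such that every vertex at which a path
   labelled W ends is the end of left-infinite paths labelled y_(-oo,-1]; by
   the definition of F(y) the follower set of such a vertex is contained in
   F(y) = f_H(v).  So W has an end vertex (namely v) whose follower set contains
   that of every end vertex.  While W has another end vertex u, follower
   separation yields a ray in f_H(d) \ f_H(u); appending a long enough prefix of
   it kills u, and since the graph is right-resolving, the number of end
   vertices drops while the dominating vertex d stays reachable from v.  Once d
   is the only end vertex, C being terminal lets us append a path from d back
   to v; every path labelled by the resulting word ends at v, and such a word
   is synchronizing. *)

From mathcomp Require Import all_boot all_order all_algebra zify.
From mathcomp Require Import boolp.
Set Implicit Arguments. Unset Strict Implicit. Unset Printing Implicit Defensive.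
Import GRing.Theory Num.Theory.

Lemma dependent_choice (T : Type) (P : nat -> T -> Prop) (R : nat -> T -> T -> Prop)
    (x0 : T) :
  P 0 x0 -> (forall n x, P n x -> exists y, P n.+1 y /\ R n x y) ->
  exists f : nat -> T, f 0 = x0 /\ forall n, P n (f n) /\ R n (f n) (f n.+1).
Proof.
move=> P0 step.
have step_total (nx : nat * T) : exists y, P nx.1 nx.2 -> P nx.1.+1 y /\ R nx.1 nx.2 y.
  case: nx => n x /=.
  have [/step [y Hy]|nPx] := pselect (P n x); first by exists y.
  by exists x0.
have [h Hh] := choice step_total.
pose f := fix f n := if n is n'.+1 then h (n', f n') else x0.
have Pf n : P n (f n) by elim: n => //= n /(Hh (n, f n)) [].
by exists f; split=> // n; split; [|exact: (Hh (n, f n) (Pf n)).2].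
Qed.

Lemma uniform_bound (T : finType) (Q : T -> Prop) (P : T -> nat -> Prop) :
  (forall c n m, P c n -> n <= m -> P c m) ->
  (forall c, Q c -> exists n, P c n) -> exists N, forall c, Q c -> P c N.
Proof.
move=> Pmono Pex.
have bound (c : T) : exists n, Q c -> P c n.
  have [/Pex [n Hn]|nQc] := pselect (Q c); first by exists n.
  by exists 0.
have [n Hn] := choice bound.
exists (\max_c n c) => c Qc; exact: Pmono (Hn c Qc) (leq_bigmax c).
Qed.

Lemma mkseqD (T : Type) (f : nat -> T) m n :
  mkseq f (m + n) = mkseq f m ++ mkseq (fun i => f (m + i)) n.
Proof. by rewrite /mkseq iotaD map_cat add0n -[X in iota X n]addn0 iotaDl -map_comp. Qed.

Definition window (T : Type) (y : int -> T) (i : int) (n : nat) : seq T :=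
  [seq y (i + k%:Z)%R | k <- iota 0 n].

Lemma size_window (T : Type) (y : int -> T) i n : size (window y i n) = n.
Proof. by rewrite size_map size_iota. Qed.

Lemma window_add (T : Type) (y : int -> T) i m n :
  window y i (m + n) = window y i m ++ window y (i + m%:Z)%R n.
Proof.
rewrite /window iotaD map_cat add0n -[X in iota X n]addn0 iotaDl -map_comp.
by congr (_ ++ _); apply: eq_map => k /=; rewrite PoszD addrA.
Qed.

Section Reachability.
Variables (V E : finType) (s t : E -> V).

Lemma reaches_trans a b c : reaches s t a b -> reaches s t b c -> reaches s t a c.
Proof.
move=> [->|[e0 [p [Hp <- Hb]]]] // [<-|[f0 [q [Hq Hf0 <-]]]]; first by right; exists e0, p.
right; exists e0, (p ++ f0 :: q); split=> //; last by rewrite last_cat.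
by move: Hp Hq; rewrite /epath cat_path /= Hb Hf0 eqxx => -> ->.
Qed.

Lemma reaches_refl a : reaches s t a a.
Proof. by left. Qed.

Lemma reaches_edge e : reaches s t (s e) (t e).
Proof. by right; exists e, [::]. Qed.

Lemma recurrent_edge e : reaches s t (t e) (s e) -> recurrent s t (s e).
Proof.
move=> [He|[f0 [q [Hq Hf0 Hl]]]]; first by exists e, [::].
by exists e, (f0 :: q); split; rewrite //= /epath /= Hf0 eqxx.
Qed.

End Reachability.

Section Walks.
Variables (V E : finType) (A : Type) (s t : E -> V) (L : E -> A).

Fixpoint walk (a : V) (w : seq A) (b : V) : Prop :=
  if w is l :: w' then exists e, [/\ s e = a, L e = l & walk (t e) w' b] else a = b.

Lemma walk_cat a w1 w2 b :
  walk a (w1 ++ w2) b <-> exists2 c, walk a w1 c & walk c w2 b.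
Proof.
elim: w1 a => [|l w1 IH] a /=; first by split=> [Hw|[c -> //]]; exists a.
split=> [[e [Ha Hl /IH [c Hc Hcb]]]|[c [e [Ha Hl Hc]] Hcb]].
  by exists c => //; exists e.
by exists e; split=> //; apply/IH; exists c.
Qed.

Lemma walk_epath a l w b : walk a (l :: w) b ->
  exists e0 p, [/\ epath s t e0 p, s e0 = a, t (last e0 p) = b & map L (e0 :: p) = l :: w].
Proof.
elim: w a l => [|l' w IH] a l [e [Ha Hl He]]; first by exists e, [::]; rewrite -Hl.
have [e0 [p [Hp He0 Hb [Hl' Hw]]]] := IH _ _ He.
exists e, (e0 :: p); split; rewrite //= ?Hl ?Hl' ?Hw //.
by rewrite /epath /= He0 eqxx.
Qed.

Lemma epath_walk e0 p : epath s t e0 p -> walk (s e0) (map L (e0 :: p)) (t (last e0 p)).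
Proof.
elim: p e0 => [|e1 p IH] e0 /=; first by exists e0.
by move=> /andP [/eqP He Hp]; exists e0; split; rewrite // He; apply: IH.
Qed.

Lemma reachesP a b : reaches s t a b <-> exists w, walk a w b.
Proof.
split=> [[->|[e0 [p [Hp <- <-]]]]|[[|l w] Hw]]; first by exists [::].
- by exists (map L (e0 :: p)); apply: epath_walk.
- by left.
- by have [e0 [p [Hp Ha Hb _]]] := walk_epath Hw; right; exists e0, p.
Qed.

Definition ends (w : seq A) (b : V) : Prop := exists a, walk a w b.

Lemma window_walk z : edge_shift s t z -> forall (i : int) n,
  walk (s (z i)) (window (fun j => L (z j)) i n) (s (z (i + n%:Z)%R)).
Proof.
move=> Hz i; elim=> [|n IH]; first by rewrite addr0.
rewrite -addn1 window_add; apply/walk_cat; exists (s (z (i + n%:Z)%R)) => //.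
by exists (z (i + n%:Z)%R); split; rewrite //= ?addr0 // Hz PoszD addrA.
Qed.

Lemma rpath_walk x : rpath s t x ->
  forall m, walk (s (x 0)) (mkseq (fun n => L (x n)) m) (s (x m)).
Proof.
move=> Hx; elim=> [|m IH] //; rewrite mkseqS -cats1; apply/walk_cat.
by exists (s (x m)) => //; exists (x m); split; rewrite //= Hx.
Qed.

End Walks.

Section Synchronizing.
Variables (V E : finType) (A : Type) (s t : E -> V) (L : E -> A).
Local Open Scope ring_scope.

Definition splice (z1 z2 : int -> E) (c1 c2 : int) (j : int) : E :=
  if j < c1 then z1 j else z2 (j - c1 + c2).

Lemma splice_edge_shift z1 z2 c1 c2 :
  edge_shift s t z1 -> edge_shift s t z2 -> s (z1 c1) = s (z2 c2) ->
  edge_shift s t (splice z1 z2 c1 c2).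
Proof.
move=> Hz1 Hz2 Hc j; rewrite /splice.
case: ltrP => Hj; case: ltrP => Hj1.
- exact: Hz1.
- by rewrite Hz1 (_ : j + 1 = c1) ?Hc ?addrN ?add0r //; lia.
- by lia.
- by rewrite Hz2; congr (s (z2 _)); lia.
Qed.

Lemma window_splice_l z1 z2 c1 c2 i n : i + n%:Z <= c1 ->
  window (fun j => L (splice z1 z2 c1 c2 j)) i n = window (fun j => L (z1 j)) i n.
Proof.
move=> Hin; apply/eq_in_map => k; rewrite mem_iota => /andP [_ Hk].
by rewrite /splice ifT //; lia.
Qed.

Lemma window_splice_r z1 z2 c1 c2 n :
  window (fun j => L (splice z1 z2 c1 c2 j)) c1 n = window (fun j => L (z2 j)) c2 n.
Proof.
by apply: eq_map => k; rewrite /splice ifF; [congr (L (z2 _)); lia | lia].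
Qed.

Lemma word_of_cat u w : word_of s t L (u ++ w) ->
  exists z i, [/\ edge_shift s t z, u = window (fun j => L (z j)) i (size u)
                & w = window (fun j => L (z j)) (i + (size u)%:Z) (size w)].
Proof.
move=> [_ [i [[z [Hz ->]] Huw]]]; exists z, i.
change (u ++ w = window (fun j => L (z j)) i (size (u ++ w))) in Huw.
rewrite size_cat window_add in Huw.
have := congr1 (take (size u)) Huw; have := congr1 (drop (size u)) Huw.
by rewrite !drop_size_cat ?take_size_cat ?size_window.
Qed.

Lemma synchronizing_of_unique_end W v :
  (forall a b, walk s t L a W b -> b = v) -> synchronizing s t L W.
Proof.
move=> Wv u x /word_of_cat [z1 [i1 [Hz1 Hu HW1]]] /word_of_cat [z2 [i2 [Hz2 HW2 Hx]]].
pose c1 := i1 + (size u)%:Z + (size W)%:Z; pose c2 := i2 + (size W)%:Z.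
have Hc1 : s (z1 c1) = v by apply: (Wv _ _ _); rewrite HW1; apply: window_walk.
have Hc2 : s (z2 c2) = v by apply: (Wv _ _ _); rewrite HW2; apply: window_walk.
exists (fun j => L (splice z1 z2 c1 c2 j)), i1; split.
  by exists (splice z1 z2 c1 c2); split=> //; apply: splice_edge_shift; rewrite ?Hc1.
rewrite -[RHS]/(window (fun j => L (splice z1 z2 c1 c2 j)) i1 (size (u ++ W ++ x))).
rewrite !size_cat !window_add -/c1 window_splice_r !window_splice_l -?Hu -?HW1 -?Hx //.
all: rewrite /c1; lia.
Qed.

End Synchronizing.

Section TerminalComponent.
Variables (V E : finType) (s t : E -> V).
Hypothesis Hss : no_sinks_sources s t.

Lemma reaches_recurrent w : exists2 r, recurrent s t r & reaches s t w r.
Proof.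
pose reachset a := [set x | `[< reaches s t a x >]].
have [n] := ubnP #|reachset w|; elim: n w => // n IH w ltwn.
have [Hw|Hnw] := pselect (recurrent s t w); first by exists w => //; left.
have [[e He] _] := Hss w.
have wte : reaches s t w (t e) by rewrite -He; apply: reaches_edge.
have sub : reachset (t e) \proper reachset w.
  apply/properP; split.
    apply/subsetP => x; rewrite !inE => /asboolP tex.
    by apply/asboolP; apply: reaches_trans wte tex.
  exists w; rewrite !inE; first by apply/asboolP; left.
  by apply/asboolPn => tew; apply: Hnw; rewrite -He; apply: recurrent_edge; rewrite He.
have [|r Hr ter] := IH (t e); first exact: leq_trans (proper_card sub) _.
by exists r => //; apply: reaches_trans wte ter.
Qed.

Variable C : {set V}.
Hypothesis HC : terminal_component s t C.

Lemma terminal_reaches_back v : v \in C -> forall w, reaches s t v w -> reaches s t w v.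
Proof.
move=> vC w vw; have [[v0 [_ C_v0]] Hterm] := HC.
have [r Hr wr] := reaches_recurrent w.
pose C' := [set x | `[< recurrent s t x /\ reaches s t r x /\ reaches s t x r >]].
have C'_comp : component s t C' by exists r; split=> // x; rewrite inE; split=> /asboolP.
have rC' : r \in C' by rewrite inE; apply/asboolP; split=> //; split; left.
have [C'C|C'C] := pselect (C' = C).
  have [_ [_ rv0]] : recurrent s t r /\ reaches s t v0 r /\ reaches s t r v0.
    by apply/C_v0; rewrite -C'C.
  have [_ [v0v _]] := (C_v0 v).1 vC.
  exact: reaches_trans wr (reaches_trans rv0 v0v).
by case: (Hterm C' C'_comp C'C); exists v, r; split=> //; apply: reaches_trans vw wr.
Qed.

End TerminalComponent.

Section LeftExtension.
Variables (V E : finType) (A : Type) (s t : E -> V) (L : E -> A) (y : int -> A).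

Notation walk := (walk s t L).

(* [window y (- (n + k)) n] is the block y_[-(n+k), -k-1] of y. *)
Definition left_extendable (k : nat) (a : V) : Prop :=
  forall n, exists b, walk b (window y (- (n + k)%:Z)%R n) a.

Lemma walk_window_suffix k m n a b :
  walk b (window y (- (m + k)%:Z)%R m) a -> n <= m ->
  exists b', walk b' (window y (- (n + k)%:Z)%R n) a.
Proof.
move=> Hb /subnK nm; move: Hb; rewrite -nm window_add => /walk_cat [c _ Hc].
by exists c; congr (walk c (window y _ n) a): Hc; lia.
Qed.

Lemma left_extendable_step k a : left_extendable k a ->
  exists e, [/\ t e = a, L e = y (- k.+1%:Z)%R & left_extendable k.+1 (s e)].
Proof.
move=> Ha; apply: contrapT => Hnot.
pose Q e := t e = a /\ L e = y (- k.+1%:Z)%R.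
pose P e n := ~ exists b, walk b (window y (- (n + k.+1)%:Z)%R n) (s e).
have [N HN] : exists N, forall e, Q e -> P e N.
  apply: uniform_bound.
  - by move=> e n m Pn nm [b Hb]; apply: Pn; apply: walk_window_suffix Hb nm.
  - by move=> e [te Le]; apply/existsNP => He; apply: Hnot; exists e.
have [b] := Ha (N + 1); rewrite window_add => /walk_cat [c Hb [e [ce Le [te]]]].
apply: (HN e); first by split=> //; rewrite Le; congr y; lia.
by exists b; rewrite ce; congr (walk b (window y _ N) c): Hb; lia.
Qed.

Lemma left_extendable_window : exists2 N, 0 < N &
  forall c, ends s t L (window y (- N%:Z)%R N) c -> left_extendable 0 c.
Proof.
pose P c n := ~ exists b, walk b (window y (- (n + 0)%:Z)%R n) c.
have [N HN] : exists N, forall c, ~ left_extendable 0 c -> P c N.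
  apply: uniform_bound.
  - by move=> c n m Pn nm [b Hb]; apply: Pn; apply: walk_window_suffix Hb nm.
  - by move=> c /existsNP.
exists N.+1 => // c [b Hb]; apply: contrapT => Hc; apply: (HN c Hc).
by apply: (walk_window_suffix (m := N.+1) (b := b)) (leqnSn N); rewrite addn0.
Qed.

Lemma left_extendable_glue_sofic u x : left_extendable 0 u -> rpath s t x -> s (x 0) = u ->
  sofic s t L (glue y (fun n => L (x n))).
Proof.
move=> Hu Hx xu.
have [e0 [te0 Le0 He0]] := left_extendable_step Hu.
pose P k e := L e = y (- k.+1%:Z)%R /\ left_extendable k.+1 (s e).
have Pstep k e : P k e -> exists e', P k.+1 e' /\ t e' = s e.
  by move=> [_ /left_extendable_step [e' [te' Le' He']]]; exists e'.
have [f [f0 Hf]] := dependent_choice (R := fun _ e e' => t e' = s e) (conj Le0 He0) Pstep.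
(* [Negz m] is the position -(m+1), which carries the edge [f m]. *)
pose z (j : int) := if j is Negz m then f m else x `|j|%N.
exists z; split.
  move=> [m|[|m]] /=.
  - by rewrite addn1 Hx.
  - by rewrite subnn f0 te0 xu.
  - by rewrite subn1 (proj2 (Hf m)).
apply: funext => -[m|m] //=; rewrite /glue /=.
by have [[-> _] _] := Hf m; congr y; lia.
Qed.

End LeftExtension.

Section RightResolving.
Variables (V E : finType) (A : Type) (s t : E -> V) (L : E -> A).
Hypothesis Hrr : right_resolving s L.

Notation walk := (walk s t L).
Notation ends := (ends s t L).

Lemma walk_det a w b b' : walk a w b -> walk a w b' -> b = b'.
Proof.
elim: w a => [|l w IH] a /=; first by move=> <- <-.
move=> [e [Ha Hl H]] [e' [Ha' Hl' H']].
have ee' : e = e' by apply: Hrr; congruence.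
by subst e'; apply: IH H H'.
Qed.

Definition follower (a : V) (xi : nat -> A) : Prop :=
  forall m, exists b, walk a (mkseq xi m) b.

Lemma fH_follower a xi : fH s t L a xi <-> follower a xi.
Proof.
split=> [[x [Hx [<- ->]]] m|Ha]; first by exists (s (x m)); apply: rpath_walk.
have [_ [e0 [Hs0 Hl0 _]]] := Ha 1.
pose P n e := walk a (mkseq xi n) (s e) /\ L e = xi n.
have Pstep n e : P n e -> exists e', P n.+1 e' /\ t e = s e'.
  move=> [Hn Hle]; have [b] := Ha n.+2.
  rewrite 2!mkseqS -!cats1 -catA => /walk_cat [c Hc [e1 [Hs1 Hl1 [e2 [Hs2 Hl2 _]]]]].
  have ce : c = s e by apply: walk_det Hc Hn.
  have e1e : e1 = e by apply: Hrr; congruence.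
  subst e1; exists e2; split=> //; split=> //; rewrite mkseqS -cats1; apply/walk_cat.
  by exists (s e) => //; exists e.
have [f [f0 Hf]] := dependent_choice (P := P) (R := fun _ e e' => t e = s e') (x0 := e0)
  (conj (esym Hs0) Hl0) Pstep.
exists f; split; first by move=> n; have [_ ->] := Hf n.
by rewrite f0; split=> //; apply: funext => n; have [[_ ->] _] := Hf n.
Qed.

Definition prepend (x : seq A) (xi : nat -> A) (i : nat) : A :=
  if i < size x then nth (xi 0) x i else xi (i - size x).

Lemma mkseq_prepend x xi m : mkseq (prepend x xi) (size x + m) = x ++ mkseq xi m.
Proof.
rewrite mkseqD /prepend; congr (_ ++ _).
  by rewrite -[RHS](mkseq_nth (xi 0)); apply/eq_in_map => i; rewrite mem_iota => /= ->.
by apply: eq_mkseq => i; rewrite ltnNge leq_addr addKn.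
Qed.

Lemma follower_prepend a x b xi :
  walk a x b -> follower b xi -> follower a (prepend x xi).
Proof.
move=> Hx Hb m; have [c Hc] := Hb m.
have : walk a (mkseq (prepend x xi) (size x + m)) c.
  by rewrite mkseq_prepend; apply/walk_cat; exists b.
by rewrite addnC mkseqD => /walk_cat [d Hd _]; exists d.
Qed.

Lemma follower_prependK a x b xi :
  walk a x b -> follower a (prepend x xi) -> follower b xi.
Proof.
move=> Hx Ha m; have [c] := Ha (size x + m).
rewrite mkseq_prepend => /walk_cat [d Hd Hc].
by rewrite (walk_det Hx Hd); exists c.
Qed.

Definition dominated (w : seq A) (d : V) : Prop :=
  ends w d /\ forall u, ends w u -> forall xi, follower u xi -> follower d xi.

Lemma dominated_cat w d x d' : dominated w d -> walk d x d' -> dominated (w ++ x) d'.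
Proof.
move=> [[a Ha] Hdom] Hx; split; first by exists a; apply/walk_cat; exists d.
move=> u [b /walk_cat [c Hc Hu]] xi Hxi.
exact: follower_prependK Hx (Hdom c (ex_intro _ b Hc) _ (follower_prepend Hu Hxi)).
Qed.

Definition endset (w : seq A) : {set V} := [set u | `[< ends w u >]].

Lemma card_endset_cat w x u : ends w u -> ~ (exists b, walk u x b) ->
  #|endset (w ++ x)| < #|endset w|.
Proof.
move=> Hu Hux.
have next_ex a : exists b, (exists b, walk a x b) -> walk a x b.
  have [[b Hb]|nHa] := pselect (exists b, walk a x b); first by exists b.
  by exists a => /nHa.
(* right-resolving: reading x is a partial map on vertices, undefined at u *)
have [next Hnext] := choice next_ex.
have sub : endset (w ++ x) \subset next @: (endset w :\ u).
  apply/subsetP => b; rewrite inE => /asboolP [a /walk_cat [c Hc Hb]].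
  have cb : next c = b by apply: walk_det (Hnext c (ex_intro _ b Hb)) Hb.
  rewrite -cb imset_f // !inE; apply/andP; split; last by apply/asboolP; exists a.
  by apply/eqP => cu; apply: Hux; exists b; rewrite -cu.
have uw : u \in endset w by rewrite inE; apply/asboolP.
rewrite (cardsD1 u (endset w)) uw add1n ltnS.
exact: leq_trans (subset_leq_card sub) (leq_imset_card _ _).
Qed.

Lemma regular_vertex_dominated v :
  regular_vertex s t L v -> exists2 w, w <> [::] & dominated w v.
Proof.
move=> [z [Hz [zv Hfol]]].
have [N N_gt0 HN] := left_extendable_window s t L (fun j => L (z j)).
exists (window (fun j => L (z j)) (- N%:Z)%R N).
  by move/(congr1 size); rewrite size_window => N0; rewrite N0 in N_gt0.
split.
  exists (s (z (- N%:Z)%R)); have := window_walk L Hz (- N%:Z)%R N.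
  by rewrite addNr -zv Hz addNr.
move=> u /HN Hu xi /fH_follower [x [Hx [xu ->]]].
apply/fH_follower/Hfol.
have Hglue := left_extendable_glue_sofic Hu Hx xu.
by split=> //; exists (glue (fun j => L (z j)) (fun n => L (x n))).
Qed.

Hypothesis Hfs : follower_separated s t L.

Lemma dominated_shrink w d u : dominated w d -> ends w u -> u <> d ->
  exists x d', [/\ walk d x d', dominated (w ++ x) d' & #|endset (w ++ x)| < #|endset w|].
Proof.
move=> Hd Hu ud.
have [xi [Hdxi Huxi]] : exists xi, follower d xi /\ ~ follower u xi.
  apply: contrapT => Hsep; apply/ud/Hfs => xi; rewrite !fH_follower.
  split; first exact: Hd.2 _ Hu xi.
  by move=> Hdxi; apply: contrapT => Huxi; apply: Hsep; exists xi.
have [m Hm] : exists m, ~ exists b, walk u (mkseq xi m) b.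
  by apply/existsNP => Hall; apply: Huxi.
have [d' Hd'] := Hdxi m.
exists (mkseq xi m), d'; split=> //; first exact: dominated_cat Hd Hd'.
exact: card_endset_cat Hu Hm.
Qed.

Variable v : V.
Hypothesis back : forall d, reaches s t v d -> reaches s t d v.

Lemma dominated_sync_extension w d : dominated w d -> reaches s t v d ->
  exists x, ends (w ++ x) v /\ forall a b, walk a (w ++ x) b -> b = v.
Proof.
have [n] := ubnP #|endset w|; elim: n w d => // n IH w d ltwn Hd vd.
have [[u Hu ud]|single] := pselect (exists2 u, ends w u & u <> d).
  have [x [d' [Hx Hd' ltx]]] := dominated_shrink Hd Hu ud.
  have vd' : reaches s t v d'.
    by apply: reaches_trans vd _; apply/(reachesP s t L); exists x.
  have [x' Hx'] := IH _ _ (leq_trans ltx ltwn) Hd' vd'.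
  by exists (x ++ x'); rewrite catA.
have [x Hx] := (reachesP s t L _ _).1 (back vd).
have [[a Ha] _] := Hd.
exists x; split; first by exists a; apply/walk_cat; exists d.
move=> a' b /walk_cat [c Hc Hb].
have cd : c = d by apply: contrapT => cd; apply: single; exists c => //; exists a'.
by subst c; apply: walk_det Hb Hx.
Qed.

End RightResolving.

Theorem lemma2p21 (V E : finType) (A : Type) (s t : E -> V) (L : E -> A)
  (Hss : no_sinks_sources s t)
  (Hrr : right_resolving s L)
  (Hreg : regular_graph s t L)
  (Hfs : follower_separated s t L)
  (C : {set V}) (HC : terminal_component s t C) :
  forall v, v \in C ->
    exists (e0 : E) (p : seq E),
      [/\ epath s t e0 p, t (last e0 p) = v & synchronizing s t L (map L (e0 :: p))].
Proof.
move=> v vC.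
have [w w_nil Hw] := regular_vertex_dominated Hrr (Hreg v).
have [x [[a Ha] sync]] := dominated_sync_extension Hrr Hfs
  (terminal_reaches_back Hss HC vC) Hw (reaches_refl s t v).
have [l [r wx]] : exists l r, w ++ x = l :: r.
  by case: w w_nil {Hw Ha sync} => // l w' _; exists l, (w' ++ x).
rewrite wx in Ha sync; have [e0 [p [Hp _ Hv Hmap]]] := walk_epath Ha.
by exists e0, p; split=> //; rewrite Hmap; apply: synchronizing_of_unique_end sync.
Qed.
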